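(* Let $f:\mathcal D_n^+\to\mathcal D_n^+$ be contracting for the stable semi-metric, i.e. there exists $\lambda\in(0,1)$ with $d_s(f(\Delta),f(\Delta'))\le\lambda\, d_s(\Delta,\Delta')$ for all $\Delta,\Delta'\in\mathcal D_n^+$. Then $f$ admits a unique fixed point $\Delta^*\in\mathcal D_n^+$, $\Delta^*=f(\Delta^* )$.
   Context: $\mathcal D_n^+$ is the set of $n\times n$ diagonal matrices with positive diagonal entries. The stable semi-metric is $d_s(\Delta,\Delta')=\left\|\frac{\Delta-\Delta'}{\sqrt{\Delta\Delta'}}\right\|=\max_i\frac{|\Delta_i-\Delta'_i|}{\sqrt{\Delta_i\Delta'_i}}$. *)

From mathcomp Require Import all_boot all_order all_algebra.
From mathcomp Require Import reals.
Set Implicit Arguments. Unset Strict Implicit. Unset Printing Implicit Defensive.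
Import Order.TTheory GRing.Theory Num.Theory.
Local Open Scope ring_scope.

Definition Dpos (R : realType) (n : nat) (A : 'M[R]_n) : bool :=
  is_diag_mx A && [forall i, 0 < A i i].

Definition ds (R : realType) (n : nat) (A B : 'M[R]_n) : R :=
  \big[Num.max/0]_(i < n) (`|A i i - B i i| / Num.sqrt (A i i * B i i)).

(* Since ds satisfies no triangle inequality, Banach's argument is run on the
   logarithms of the diagonal entries instead: for positive reals,
   |ln x - ln y| <= 2 stable_dist x y, so along an orbit of f the logarithms
   move by at most 2 lambda^k ds(D0, f D0) at step k.  They are therefore
   Cauchy, and the orbit converges entrywise to a positive diagonal matrix.
   Continuity of stable_dist turns the contraction inequality into
   ds(L, f L) <= 0 at the limit L, and two fixed points D, D' satisfy
   ds(D, D') <= lambda ds(D, D'), hence coincide. *)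

From mathcomp Require Import all_boot all_order all_algebra.
From mathcomp Require Import reals.
From mathcomp Require Import boolp classical_sets topology normedtype sequences realfun exp.
From mathcomp Require Import ring lra.
Import Order.TTheory GRing.Theory Num.Theory numFieldNormedType.Exports.
Local Open Scope ring_scope.
Local Open Scope classical_set_scope.

Lemma cvgn_geometric_increments (R : realType) (u : R ^nat) (c q : R) :
  `|q| < 1 -> (forall k, `|u k.+1 - u k| <= c * q ^+ k) -> cvgn u.
Proof.
move=> q1 hu.
have -> : u = (fun k => u 0%N + series (telescope u) k).
  by apply: funext => k; rewrite -eq_sum_telescope.
apply: is_cvgD; first exact: is_cvg_cst.
apply: normed_cvg.
apply: (series_le_cvg _ _ _ (@is_cvg_geometric_series _ c q q1)) => k /=.
- by [].
- exact: le_trans (hu k).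
- exact: hu.
Qed.

Section StableDistance.
Context {R : realType}.
Implicit Types x y : R.

Definition stable_dist x y := `|x - y| / Num.sqrt (x * y).

Lemma stable_dist_ge0 x y : 0 <= stable_dist x y.
Proof. by rewrite divr_ge0 ?sqrtr_ge0. Qed.

Lemma stable_distxx x : stable_dist x x = 0.
Proof. by rewrite /stable_dist subrr normr0 mul0r. Qed.

Lemma stable_dist_le0 x y : 0 < x -> 0 < y -> stable_dist x y <= 0 -> x = y.
Proof.
move=> x0 y0; rewrite /stable_dist ler_pdivrMr ?sqrtr_gt0 ?mulr_gt0 // mul0r.
by rewrite normr_le0 subr_eq0 => /eqP.
Qed.

Lemma ln_le_subr1 x : 0 < x -> ln x <= x - 1.
Proof. by move=> x0; have := @le_ln1Dx R (x - 1); rewrite subrKC; apply; lra. Qed.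

Lemma lnB_le x y : 0 < x -> 0 < y -> ln x - ln y <= (x - y) / y.
Proof.
move=> x0 y0; rewrite -ln_div ?posrE // mulrBl divff ?gt_eqF //.
by apply: ln_le_subr1; rewrite divr_gt0.
Qed.

Lemma norm_lnB_le_stable_dist x y : 0 < x -> 0 < y ->
  `|ln x - ln y| <= 2 * stable_dist x y.
Proof.
move=> x0 y0; set s := Num.sqrt x; set r := Num.sqrt y.
have s0 : 0 < s by rewrite sqrtr_gt0.
have r0 : 0 < r by rewrite sqrtr_gt0.
have xE : x = s ^+ 2 by rewrite sqr_sqrtr // ltW.
have yE : y = r ^+ 2 by rewrite sqr_sqrtr // ltW.
have -> : ln x - ln y = 2 * (ln s - ln r).
  by rewrite xE yE !lnXn // mulrBr !mulr_natl.
have -> : stable_dist x y = `|s - r| / r + `|s - r| / s.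
  rewrite /stable_dist xE yE -exprMn sqrtr_sqr (gtr0_norm (mulr_gt0 s0 r0)).
  rewrite subr_sqr normrM (gtr0_norm (addr_gt0 s0 r0)).
  by field; rewrite !gt_eqF.
rewrite normrM ger0_norm // ler_pM2l //.
have ln_sr := lnB_le _ _ s0 r0; have ln_rs := lnB_le _ _ r0 s0.
have sr_le : (s - r) / r <= `|s - r| / r.
  by apply: ler_wpM2r; [rewrite invr_ge0 ltW | exact: ler_norm].
have rs_le : (r - s) / s <= `|s - r| / s.
  by apply: ler_wpM2r; [rewrite invr_ge0 ltW | rewrite distrC ler_norm].
have r_term_ge0 : 0 <= `|s - r| / r by rewrite divr_ge0 // ltW.
have s_term_ge0 : 0 <= `|s - r| / s by rewrite divr_ge0 // ltW.
by rewrite ler_norml; apply/andP; split; lra.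
Qed.

Lemma stable_dist_cvg {T : Type} (F : set_system T) {FF : ProperFilter F}
    (a b : T -> R) (x y : R) : 0 < x -> 0 < y ->
  a t @[t --> F] --> x -> b t @[t --> F] --> y ->
  stable_dist (a t) (b t) @[t --> F] --> stable_dist x y.
Proof.
move=> x0 y0 ax bx; apply: cvgM; first by apply: cvg_norm; apply: cvgB.
apply: cvgV; first by rewrite gt_eqF // sqrtr_gt0 mulr_gt0.
by apply: (continuous_cvg _ (@sqrt_continuous R _)); apply: cvgM.
Qed.

End StableDistance.

Section PositiveDiagonal.
Context {R : realType} {n : nat}.
Implicit Types A B : 'M[R]_n.

Lemma Dpos_gt0 {A} : Dpos A -> forall i, 0 < A i i.
Proof. by case/andP => _ /forallP. Qed.

Lemma Dpos_diag_mx (d : 'rV[R]_n) : (forall i, 0 < d 0 i) -> Dpos (diag_mx d).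
Proof.
move=> d_gt0; rewrite /Dpos diag_mx_is_diag; apply/forallP => i.
by rewrite mxE eqxx mulr1n.
Qed.

Lemma ds_ge0 A B : 0 <= ds A B.
Proof. exact: bigmax_ge_id. Qed.

Lemma stable_dist_le_ds A B i : stable_dist (A i i) (B i i) <= ds A B.
Proof. exact: le_bigmax. Qed.

Lemma ds_le A B c : 0 <= c ->
  (forall i, stable_dist (A i i) (B i i) <= c) -> ds A B <= c.
Proof. by move=> c0 le_c; apply: bigmax_le => // i _; apply: le_c. Qed.

Lemma ds_le0 A B : Dpos A -> Dpos B -> ds A B <= 0 -> A = B.
Proof.
move=> DA DB dAB0.
have /andP[/is_diag_mxP dA _] := DA; have /andP[/is_diag_mxP dB _] := DB.
apply/matrixP => i j; have [<-|ij] := eqVneq i j; last by rewrite dA ?dB.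
apply: stable_dist_le0; [exact: Dpos_gt0 | exact: Dpos_gt0 |].
exact: le_trans (stable_dist_le_ds A B i) dAB0.
Qed.

Lemma ds_cvg0 {T : Type} (F : set_system T) {FF : Filter F} (M : T -> 'M[R]_n) B :
  (forall i, stable_dist (M t i i) (B i i) @[t --> F] --> 0) ->
  ds (M t) B @[t --> F] --> 0.
Proof.
move=> cvg0; apply/cvgrPdist_le => e e0.
have : \forall t \near F, forall i, stable_dist (M t i i) (B i i) <= e.
  apply: filter_forall => i; have /cvgrPdist_le/(_ e e0) := cvg0 i.
  by apply: filterS => t; rewrite sub0r normrN ger0_norm // stable_dist_ge0.
apply: filterS => t le_e.
by rewrite sub0r normrN ger0_norm ?ds_ge0 // ds_le // ltW.
Qed.

End PositiveDiagonal.

Section StableContraction.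
Context {R : realType} {n : nat} (f : 'M[R]_n -> 'M[R]_n) {lambda : R}.
Hypothesis f_Dpos : forall D, Dpos D -> Dpos (f D).
Hypothesis lambda_ge0 : 0 <= lambda.
Hypothesis lambda_lt1 : lambda < 1.
Hypothesis f_contract : forall D D', Dpos D -> Dpos D' ->
  ds (f D) (f D') <= lambda * ds D D'.

Lemma stable_contraction_fixpoint_unique D D' : Dpos D -> Dpos D' ->
  D = f D -> D' = f D' -> D = D'.
Proof.
move=> DD DD' fD fD'; apply: ds_le0 => //.
have := f_contract _ _ DD DD'; rewrite -fD -fD' -subr_le0 -{1}[ds D D']mul1r -mulrBl.
by rewrite pmulr_rle0 // subr_gt0.
Qed.

Variable D0 : 'M[R]_n.
Hypothesis D0_Dpos : Dpos D0.

Let orbit k := iter k f D0.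

Lemma orbit_Dpos k : Dpos (orbit k).
Proof. by elim: k => // k; apply: f_Dpos. Qed.

Lemma ds_orbit_le k : ds (orbit k) (orbit k.+1) <= lambda ^+ k * ds D0 (f D0).
Proof.
elim: k => [|k IH]; first by rewrite mul1r.
rewrite exprS -mulrA.
apply: le_trans (f_contract _ _ (orbit_Dpos k) (orbit_Dpos k.+1)) _.
exact: ler_wpM2l.
Qed.

Lemma ln_orbit_cvg i : cvgn (fun k => ln (orbit k i i)).
Proof.
apply: (@cvgn_geometric_increments _ _ (2 * ds D0 (f D0)) lambda).
  by rewrite ger0_norm.
move=> k; have orbit_gt0 m : 0 < orbit m i i := Dpos_gt0 (orbit_Dpos m) i.
rewrite distrC.
apply: le_trans (norm_lnB_le_stable_dist _ _ (orbit_gt0 k) (orbit_gt0 k.+1)) _.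
rewrite -mulrA ler_pM2l // mulrC.
exact: le_trans (stable_dist_le_ds _ _ i) (ds_orbit_le k).
Qed.

(* Taking the limit in logarithmic coordinates makes its positivity automatic. *)
Definition orbit_lim : 'M[R]_n :=
  diag_mx (\row_i expR (limn (fun k => ln (orbit k i i)))).

Lemma orbit_lim_Dpos : Dpos orbit_lim.
Proof. by apply: Dpos_diag_mx => i; rewrite mxE expR_gt0. Qed.

Lemma orbit_cvg i : orbit k i i @[k --> \oo] --> orbit_lim i i.
Proof.
have -> : (fun k => orbit k i i) = expR \o (fun k => ln (orbit k i i)).
  by apply: funext => k /=; rewrite lnK // posrE (Dpos_gt0 (orbit_Dpos k)).
rewrite /orbit_lim !mxE eqxx mulr1n.
apply: continuous_cvg; [exact: continuous_expR | exact: ln_orbit_cvg].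
Qed.

Lemma ds_orbit_lim_cvg0 : ds (orbit k) orbit_lim @[k --> \oo] --> 0.
Proof.
apply: ds_cvg0 => i; rewrite -(stable_distxx (orbit_lim i i)).
have lim_gt0 := Dpos_gt0 orbit_lim_Dpos i.
by apply: stable_dist_cvg => //; [exact: orbit_cvg | exact: cvg_cst].
Qed.

Lemma orbit_lim_fixed : orbit_lim = f orbit_lim.
Proof.
have fDpos := f_Dpos _ orbit_lim_Dpos.
apply: (ds_le0 _ _ orbit_lim_Dpos fDpos); apply: ds_le => // i.
have lhs : stable_dist (orbit k.+1 i i) (f orbit_lim i i) @[k --> \oo]
    --> stable_dist (orbit_lim i i) (f orbit_lim i i).
  apply: stable_dist_cvg; last exact: cvg_cst.
  - exact: Dpos_gt0 orbit_lim_Dpos i.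
  - exact: Dpos_gt0 fDpos i.
  by have := orbit_cvg i; rewrite -cvg_shiftS.
have rhs : lambda * ds (orbit k) orbit_lim @[k --> \oo] --> lambda * 0.
  by apply: cvgM; [exact: cvg_cst | exact: ds_orbit_lim_cvg0].
rewrite -(mulr0 lambda); apply: ler_cvg_to lhs rhs _; apply: nearW => k.
apply: le_trans (stable_dist_le_ds _ _ i) _.
exact: f_contract (orbit_Dpos k) orbit_lim_Dpos.
Qed.

End StableContraction.

Theorem theorem2 (R : realType) (n : nat) (f : 'M[R]_n -> 'M[R]_n)
  (hf : forall D, Dpos D -> Dpos (f D))
  (lambda : R) (hl0 : 0 < lambda) (hl1 : lambda < 1)
  (hc : forall D D', Dpos D -> Dpos D' -> ds (f D) (f D') <= lambda * ds D D') :
  exists Dstar, [/\ Dpos Dstar, Dstar = f Dstar &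
    forall D, Dpos D -> D = f D -> D = Dstar].
Proof.
pose D0 : 'M[R]_n := diag_mx (const_mx 1).
have D0_Dpos : Dpos D0 by apply: Dpos_diag_mx => i; rewrite mxE ltr01.
have lim_fixed := orbit_lim_fixed f hf (ltW hl0) hl1 hc D0 D0_Dpos.
exists (orbit_lim f D0); split; [exact: orbit_lim_Dpos | exact: lim_fixed |].
move=> D DD fD.
exact: (stable_contraction_fixpoint_unique f hl1 hc _ _ DD (orbit_lim_Dpos f D0) fD lim_fixed).
Qed.
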